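(* Assume the setting of the context. There exists $N$ such that every walk of length at least $N$ in $G(\sigma)$ ends at a singleton vertex if and only if the sequence $x$ is periodic.
   Context: Let $\sigma:\mathcal A^*\to\mathcal A^*$ be a primitive substitution of constant length $l\ge2$ and $x\in\mathcal A^{\mathbb Z}$ an admissible two-sided fixed point of $\sigma$ (so $x_{lj+i}=\sigma(x_j)_i$, $w_i$ being the $i$-th letter of $w$ indexed from $0$); $x$ is not assumed non-periodic here. Height $h=\max\{n\ge1 : \gcd(n,l)=1,\ n\mid g_0\}$, $g_0=\gcd\{n\ge1:x_n=x_0\}$. For $0\le i<h$, $\mathcal A_i=\{x_{i+nh}:n\in\mathbb Z\}$. Graph $G(\sigma)$: vertices are subsets of $\mathcal A$; for a subset $\mathcal C$ and $0\le i<l$ there is an edge labelled $i$ from $\mathcal C$ to $\{\sigma(b)_i : b\in\mathcal C\}$; $G(\sigma)$ is restricted to vertices reachable from $\mathcal A_0,\dots,\mathcal A_{h-1}$. $x$ is periodic if $x_{n+q}=x_n$ for all $n$ for some $q\ge1$. *)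

From HB Require Import structures.
From mathcomp Require Import all_boot all_order all_algebra.
Set Implicit Arguments. Unset Strict Implicit. Unset Printing Implicit Defensive.
Import Order.TTheory GRing.Theory Num.Theory.

(* A constant-length substitution of length l on the finite alphabet A is
   sigma : A -> l.-tuple A ; sigma(b)_i = tnth (sigma b) i. *)

Definition subst_word (A : finType) (l : nat) (sigma : A -> l.-tuple A)
  (w : seq A) : seq A := flatten (map (fun b => val (sigma b)) w).

Definition subst_iter (A : finType) (l : nat) (sigma : A -> l.-tuple A)
  (k : nat) (a : A) : seq A := iter k (subst_word sigma) [:: a].

Definition primitive (A : finType) (l : nat) (sigma : A -> l.-tuple A) : Prop :=
  exists k : nat, (0 < k)%N /\ forall a b : A, b \in subst_iter sigma k a.

Definition is_fixed_point (A : finType) (l : nat) (sigma : A -> l.-tuple A)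
  (x : int -> A) : Prop :=
  forall (j : int) (i : 'I_l), x (j * Posz l + Posz (i : nat))%R = tnth (sigma (x j)) i.

Definition admissible (A : finType) (l : nat) (sigma : A -> l.-tuple A)
  (x : int -> A) : Prop :=
  exists (k : nat) (a : A), infix [:: x (-1)%R; x 0%R] (subst_iter sigma k a).

(* d divides g0 = gcd {n >= 1 : x_n = x_0}, i.e. d divides every such n. *)
Definition divides_return_times (A : finType) (x : int -> A) (d : nat) : Prop :=
  forall n : nat, (0 < n)%N -> x (Posz n) = x 0%R -> (d %| n)%N.

Definition is_height (A : finType) (l : nat) (x : int -> A) (h : nat) : Prop :=
  [/\ (0 < h)%N, coprime h l, divides_return_times x h &
      forall n : nat, (0 < n)%N -> coprime n l -> divides_return_times x n ->
        (n <= h)%N].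

Definition is_height_class (A : finType) (x : int -> A) (h i : nat)
  (C : {set A}) : Prop :=
  forall a : A, a \in C <-> exists n : int, x (Posz i + n * Posz h)%R = a.

Definition edge (A : finType) (l : nat) (sigma : A -> l.-tuple A)
  (C : {set A}) (i : 'I_l) : {set A} := [set tnth (sigma b) i | b in C].

Definition walk_end (A : finType) (l : nat) (sigma : A -> l.-tuple A)
  (C : {set A}) (w : seq 'I_l) : {set A} := foldl (edge sigma) C w.

Definition vertex_of_G (A : finType) (l : nat) (sigma : A -> l.-tuple A)
  (x : int -> A) (h : nat) (C : {set A}) : Prop :=
  exists i : nat, (i < h)%N /\ exists C0 : {set A},
    is_height_class x h i C0 /\ exists u : seq 'I_l, C = walk_end sigma C0 u.

Definition periodic (A : finType) (x : int -> A) : Prop :=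
  exists q : nat, (0 < q)%N /\ forall n : int, x (n + Posz q)%R = x n.

From mathcomp Require Import all_boot all_order all_algebra.
From mathcomp Require Import ring.
From Stdlib Require Import ClassicalEpsilon.
Import GRing.Theory Num.Theory.
Set Implicit Arguments. Unset Strict Implicit. Unset Printing Implicit Defensive.

(* Writing positions in base l, the fixed-point equation shows that the vertex
   reached from A_r along a word u of length K is the set of letters
   x_{(r + n h) l^K + [u]}, n in Z, where [u] is the number with base-l digits u.
   If all these sets are singletons for K = N, then h l^N is a period of x.
   Conversely, let p be the least period of x. For every return time n of x_0,
   l^p n is again a period, so p divides l^p n; as h is the largest divisor of
   all return times that is coprime to l, every prime factor of p/h divides l.
   Hence p divides h l^K once K >= p/h, and then the vertices reached by words
   of length K are singletons. *)

Definition nat_of_digits (l : nat) (u : seq 'I_l) : nat :=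
  foldl (fun acc (i : 'I_l) => acc * l + i)%N 0%N u.

Lemma nat_of_digits_rcons (l : nat) (u : seq 'I_l) (i : 'I_l) :
  nat_of_digits (rcons u i) = (nat_of_digits u * l + i)%N.
Proof. by rewrite /nat_of_digits foldl_rcons. Qed.

Lemma digits_of_nat (l K t : nat) : (t < l ^ K)%N ->
  exists2 u : seq 'I_l, size u = K & nat_of_digits u = t.
Proof.
elim: K t => [|K IH] t t_lt.
  by move: t_lt; rewrite expn0 ltnS leqn0 => /eqP ->; exists [::].
have l0 : (0 < l)%N by case: l t_lt {IH} => //; rewrite exp0n.
have mod_lt : (t %% l < l)%N by rewrite ltn_pmod.
have [|u size_u val_u] := IH (t %/ l); first by rewrite ltn_divLR // -expnSr.
exists (rcons u (Ordinal mod_lt)); first by rewrite size_rcons size_u.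
by rewrite nat_of_digits_rcons val_u -divn_eq.
Qed.

Lemma int_euclid (n : int) (d : nat) : (0 < d)%N ->
  exists (q : int) (r : nat), (r < d)%N /\ n = (q * Posz d + Posz r)%R.
Proof.
move=> d0; have d0z : (0 < Posz d)%R by [].
move: (ltz_pmod n d0z) (modz_ge0 n (lt0r_neq0 d0z)) (divz_eq n (Posz d)).
by case: (n %% Posz d)%Z => // r r_lt _ n_eq; exists (n %/ Posz d)%Z, r.
Qed.

Section Periods.
Variables (T : Type) (x : int -> T).

Definition is_period (q : int) : Prop := forall n : int, x (n + q)%R = x n.

Lemma is_period_mulz (q : int) : is_period q -> forall k : int, is_period (k * q)%R.
Proof.
move=> per_q.
have per_nat (k : nat) : is_period (Posz k * q)%R.
  elim: k => [|k IH] n; first by rewrite mul0r addr0.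
  by rewrite -addn1 PoszD mulrDl mul1r addrA per_q IH.
case=> k n; first exact: per_nat.
by rewrite -(per_nat k.+1 (n + Negz k * q)%R) NegzE; congr x; ring.
Qed.

Lemma exists_min_period : (exists q : nat, (0 < q)%N /\ is_period (Posz q)) ->
  exists p : nat, [/\ (0 < p)%N, is_period (Posz p) &
    forall q : nat, (0 < q)%N -> is_period (Posz q) -> (p %| q)%N].
Proof.
case=> Q [Q0 per_Q].
pose P q := (0 < q)%N && excluded_middle_informative (is_period (Posz q)).
have exP : exists q, P q.
  by exists Q; rewrite /P Q0; case: excluded_middle_informative.
have [p /andP[p0 /sumboolP per_p] min_p] := ex_minnP exP.
exists p; split=> // q q0 per_q; apply: contraT => not_dvd.
have per_mod : is_period (Posz (q %% p)).
  move=> n; rewrite -(is_period_mulz per_p (Posz (q %/ p))) -addrA -PoszM -PoszD.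
  by rewrite addnC -divn_eq per_q.
have := min_p (q %% p)%N; rewrite /P lt0n not_dvd.
case: excluded_middle_informative => // _ /(_ isT).
by rewrite leqNgt ltn_pmod.
Qed.

End Periods.

Lemma height_class_exists (A : finType) (x : int -> A) (h r : nat) :
  exists C : {set A}, is_height_class x h r C.
Proof.
exists [set a | excluded_middle_informative (exists n : int, x (Posz r + n * Posz h)%R = a)].
by move=> a; rewrite inE; split=> /sumboolP.
Qed.

Section FixedPointWalks.
Variables (A : finType) (l : nat) (sigma : A -> l.-tuple A) (x : int -> A).
Hypothesis fixed_x : is_fixed_point sigma x.

Definition subst_letter (a : A) (u : seq 'I_l) : A :=
  foldl (fun b i => tnth (sigma b) i) a u.

Lemma walk_endE (C : {set A}) (u : seq 'I_l) :
  walk_end sigma C u = [set subst_letter b u | b in C].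
Proof.
elim/last_ind: u => [|u i IH]; first by rewrite imset_id.
rewrite /walk_end foldl_rcons -/(walk_end sigma C u) IH /edge -imset_comp.
by apply: eq_imset => b; rewrite /subst_letter foldl_rcons.
Qed.

Lemma walk_end_cat (C : {set A}) (u w : seq 'I_l) :
  walk_end sigma (walk_end sigma C u) w = walk_end sigma C (u ++ w).
Proof. by rewrite /walk_end foldl_cat. Qed.

Lemma fixed_point_subst_letter (m : int) (u : seq 'I_l) :
  x (m * Posz (l ^ size u) + Posz (nat_of_digits u))%R = subst_letter (x m) u.
Proof.
elim/last_ind: u => [|u i IH]; first by rewrite /= expn0 mulr1 addr0.
rewrite /subst_letter foldl_rcons -/(subst_letter _ _) -IH -fixed_x.
by congr x; rewrite size_rcons nat_of_digits_rcons expnSr !PoszD !PoszM; ring.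
Qed.

Lemma fixed_point_block_eq (m1 m2 : int) (K v : nat) :
  x m1 = x m2 -> (v < l ^ K)%N ->
  x (m1 * Posz (l ^ K) + Posz v)%R = x (m2 * Posz (l ^ K) + Posz v)%R.
Proof.
move=> eq_x /digits_of_nat[u <- <-].
by rewrite !fixed_point_subst_letter eq_x.
Qed.

Lemma walk_end_height_class (h r : nat) (C : {set A}) (u : seq 'I_l) (a : A) :
  is_height_class x h r C ->
  a \in walk_end sigma C u <-> exists n : int,
    x ((Posz r + n * Posz h) * Posz (l ^ size u) + Posz (nat_of_digits u))%R = a.
Proof.
move=> class_C; rewrite walk_endE; split.
  by case/imsetP=> _ /class_C[n <-] ->; exists n; rewrite fixed_point_subst_letter.
case=> n <-; rewrite fixed_point_subst_letter; apply: imset_f.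
by apply/class_C; exists n.
Qed.

Lemma walk_end_singleton (h r : nat) (C : {set A}) (u : seq 'I_l) :
  is_height_class x h r C -> is_period x (Posz (h * l ^ size u)) ->
  #|walk_end sigma C u| = 1%N.
Proof.
move=> class_C per; apply/eqP/cards1P.
exists (x (Posz r * Posz (l ^ size u) + Posz (nat_of_digits u))%R).
apply/setP => a; rewrite in_set1; apply/idP/eqP.
  case/(walk_end_height_class _ _ class_C) => n <-.
  by rewrite mulrDl -mulrA -PoszM addrAC is_period_mulz.
move=> ->; apply/(walk_end_height_class _ _ class_C).
by exists 0%R; rewrite mul0r addr0.
Qed.

Lemma return_time_period (p K n : nat) :
  (0 < p)%N -> (p <= l ^ K)%N -> is_period x (Posz p) -> x (Posz n) = x 0%R ->
  is_period x (Posz (l ^ K * n)).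
Proof.
move=> p0 p_le per_p return_n j.
have [c [v [v_lt ->]]] := int_euclid j p0.
have v_lt' : (v < l ^ K)%N := leq_trans v_lt p_le.
have -> : (c * Posz p + Posz v + Posz (l ^ K * n) =
  Posz n * Posz (l ^ K) + Posz v + c * Posz p)%R by rewrite PoszM; ring.
rewrite is_period_mulz // (fixed_point_block_eq return_n v_lt') mul0r add0r.
by rewrite addrC is_period_mulz.
Qed.

End FixedPointWalks.

Lemma pnat_dvdn_exp (l m : nat) : (0 < l)%N -> \pi(l).-nat m -> (m %| l ^ m)%N.
Proof.
move=> l0 pi_m; have m0 : (0 < m)%N by case/andP: pi_m.
apply/dvdn_partP => // q q_m; rewrite p_part.
have /andP[q_prime /andP[_ q_l]] : [&& prime q, 0 < l & q %| l]%N.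
  by rewrite -mem_primes; apply: pnatPpi pi_m q_m.
apply: (@dvdn_trans (q ^ m)); last exact: dvdn_exp2r.
by rewrite dvdn_exp2l // ltnW // ltn_logl.
Qed.

Lemma height_pnat (A : finType) (l : nat) (x : int -> A) (h p K : nat) :
  (0 < l)%N -> is_height l x h -> (0 < p)%N -> (h %| p)%N ->
  (forall n : nat, (0 < n)%N -> x (Posz n) = x 0%R -> (p %| l ^ K * n)%N) ->
  \pi(l).-nat (p %/ h).
Proof.
move=> l0 [h0 coprime_hl _ max_h] p0 h_p p_return.
(* h times the part of p/h coprime to l would divide every return time. *)
set m' := (p %/ h)`_(\pi(l))^'.
suff m'1 : m' = 1%N.
  by rewrite -pnatNK -partn_eq1 -/m' ?m'1 // divn_gt0 // dvdn_leq.
have coprime_m'l : coprime m' l.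
  by rewrite coprime_sym (pnat_coprime (pnat_pi l0)) ?part_pnat.
have coprime_hm'l : coprime (h * m') l by rewrite coprimeMl coprime_hl.
have : (h * m' <= h)%N.
  apply: max_h => [||n n0 return_n]; first by rewrite muln_gt0 h0 part_gt0.
    exact: coprime_hm'l.
  have hm'_p : (h * m' %| p)%N.
    by rewrite -(divnK h_p) mulnC dvdn_pmul2r // dvdn_part.
  by rewrite -(Gauss_dvdr _ (coprimeXr K coprime_hm'l)) (dvdn_trans hm'_p) ?p_return.
rewrite -{2}[h]muln1 leq_pmul2l // => m'_le1.
by apply/eqP; rewrite eqn_leq m'_le1 part_gt0.
Qed.

Lemma periodic_height_period (A : finType) (l : nat) (sigma : A -> l.-tuple A)
  (x : int -> A) (h : nat) :
  (1 < l)%N -> is_fixed_point sigma x -> is_height l x h -> periodic x ->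
  exists N : nat, forall K : nat, (N <= K)%N -> is_period x (Posz (h * l ^ K)).
Proof.
move=> l1 fixed_x height_h /exists_min_period[p [p0 per_p min_p]].
have l0 : (0 < l)%N := ltnW l1.
have [h0 _ return_h _] := height_h.
have h_p : (h %| p)%N by apply: return_h; rewrite // -[Posz p]add0r per_p.
have pi_ph : \pi(l).-nat (p %/ h).
  apply: (height_pnat (K := p) l0 height_h p0 h_p) => n n0 return_n.
  have p_le : (p <= l ^ p)%N by rewrite ltnW // ltn_expl.
  apply: min_p; first by rewrite muln_gt0 expn_gt0 l0.
  exact (return_time_period fixed_x p0 p_le per_p return_n).
exists (p %/ h)%N => K ph_K.
have /dvdnP[c ->] : (p %| h * l ^ K)%N.
  rewrite -(divnK h_p) mulnC dvdn_pmul2l //.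
  by apply: dvdn_trans (pnat_dvdn_exp l0 pi_ph) _; rewrite dvdn_exp2l.
by rewrite PoszM; apply: is_period_mulz.
Qed.

Definition synchronizing (A : finType) (l : nat) (sigma : A -> l.-tuple A)
  (x : int -> A) (h : nat) : Prop :=
  exists N : nat, forall (C : {set A}) (w : seq 'I_l),
    vertex_of_G sigma x h C -> (N <= size w)%N -> #|walk_end sigma C w| = 1%N.

Lemma periodic_synchronizing (A : finType) (l : nat) (sigma : A -> l.-tuple A)
  (x : int -> A) (h : nat) :
  (1 < l)%N -> is_fixed_point sigma x -> is_height l x h -> periodic x ->
  synchronizing sigma x h.
Proof.
move=> l1 fixed_x height_h /(periodic_height_period l1 fixed_x height_h)[N per_N].
exists N => _ w [r [_ [C [class_C [u ->]]]]] N_w.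
have N_le : (N <= size (u ++ w))%N by rewrite size_cat (leq_trans N_w) ?leq_addl.
by rewrite walk_end_cat (walk_end_singleton fixed_x class_C (per_N _ N_le)).
Qed.

Lemma synchronizing_periodic (A : finType) (l : nat) (sigma : A -> l.-tuple A)
  (x : int -> A) (h : nat) :
  (0 < l)%N -> (0 < h)%N -> is_fixed_point sigma x -> synchronizing sigma x h ->
  periodic x.
Proof.
move=> l0 h0 fixed_x [N sync]; exists (h * l ^ N)%N.
have lN0 : (0 < l ^ N)%N by rewrite expn_gt0 l0.
split=> [|n]; first by rewrite muln_gt0 h0.
have [M [t [t_lt ->]]] := int_euclid n lN0.
have [k [r [r_lt ->]]] := int_euclid M h0.
have [w size_w val_w] := digits_of_nat t_lt.
have [C class_C] := height_class_exists x h r.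
have vertex_C : vertex_of_G sigma x h C.
  by exists r; split=> //; exists C; split=> //; exists [::].
have mem_walk (j : int) :
    x ((Posz r + j * Posz h) * Posz (l ^ N) + Posz t)%R \in walk_end sigma C w.
  by apply/(walk_end_height_class fixed_x _ _ class_C); exists j; rewrite size_w val_w.
have /eqP/cards1P[a walk_a] := sync C w vertex_C (eq_leq (esym size_w)).
move: (mem_walk k) (mem_walk (k + 1)%R); rewrite walk_a !in_set1 => /eqP x_k /eqP x_k1.
rewrite (_ : (k * Posz h + Posz r) * Posz (l ^ N) + Posz t + Posz (h * l ^ N)
  = (Posz r + (k + 1) * Posz h) * Posz (l ^ N) + Posz t)%R; last by rewrite PoszM; ring.
by rewrite x_k1 [(k * _ + _)%R]addrC x_k.
Qed.

Theorem mainTheorem17 (A : finType) (l : nat) (sigma : A -> l.-tuple A)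
  (x : int -> A) (h : nat) :
  (2 <= l)%N ->
  primitive sigma ->
  is_fixed_point sigma x ->
  admissible sigma x ->
  is_height l x h ->
  (exists N : nat, forall (C : {set A}) (w : seq 'I_l),
      vertex_of_G sigma x h C -> (N <= size w)%N ->
      #|walk_end sigma C w| = 1%N)
  <-> periodic x.
Proof.
move=> l2 _ fixed_x _ height_h; split.
  by apply: synchronizing_periodic (ltnW l2) _ fixed_x; case: height_h.
exact: periodic_synchronizing.
Qed.
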